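(* Let ${\cal F}=(V,E)$ be a hypergraph with $V=[n]$ and all hyperedges in $E$ of size at most $d$. Let $q$ and $\chi$ be positive integers such that $1\leq q\leq |E|-1$ and $\chi=\min\{ |\bigcup_{i=1}^q e'_i\setminus e| : e,e'_1,\ldots,e'_q \text{ are } q+1 \text{ distinct hyperedges of } E\}$. Then, in the group testing model where exactly one hyperedge $e^*\in E$ is the defective (contaminated) set and a test on a pool $T\subseteq[n]$ is positive if and only if $T\cap e^*\neq\emptyset$, there exists a trivial two-stage group testing algorithm (two stages, each completely non-adaptive, with the second stage consisting only of tests on individual elements) that finds the defective hyperedge and uses a number of tests $t$ with $$ t< \frac {2e(d+\chi)}{\chi} \left(1+ \ln\left({d+\chi-1\choose d+\chi-d-1}\beta\right)\right)+dq,$$ where $\beta=\min\left\{e^q|E|\left({|E|-1\over q}\right)^q, e^{d+\chi-1}\left({n+d-1\over d+\chi-1}\right)^{d+\chi}\right\}$ and $e=2.7182\ldots$ is the base of the natural logarithm.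
   Context: Group testing in a hypergraph ${\cal F}=([n],E)$: the set of defective elements is one unknown hyperedge $e^*\in E$; a test on a pool of elements answers ''yes'' iff the pool contains at least one defective element. A two-stage algorithm consists of two stages, each a completely non-adaptive algorithm (all tests of a stage chosen beforehand); it is trivial if the second stage only tests individual elements. The first stage tests the pools given by the rows of a selector, after which at most $q$ candidate hyperedges remain, and the second stage individually tests their at most $dq$ vertices. *)

From HB Require Import structures.
From mathcomp Require Import all_boot all_order all_algebra.
Set Implicit Arguments. Unset Strict Implicit. Unset Printing Implicit Defensive.
Import Order.TTheory GRing.Theory Num.Theory.

(* A configuration of q+1 distinct hyperedges e, e'_1, ..., e'_q of E:
   f enumerates e'_1..e'_q (injective), none of them equals e. *)
Definition distinct_config (n q : nat) (E : {set {set 'I_n}})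
  (e : {set 'I_n}) (f : 'I_q -> {set 'I_n}) : Prop :=
  [/\ e \in E, (forall i, f i \in E), injective f & (forall i, f i != e)].

Definition config_value (n q : nat) (e : {set 'I_n}) (f : 'I_q -> {set 'I_n}) : nat :=
  #|(\bigcup_(i < q) f i) :\: e|.

Definition is_chi (n : nat) (E : {set {set 'I_n}}) (q chi : nat) : Prop :=
  (exists e (f : 'I_q -> {set 'I_n}), distinct_config E e f /\ config_value e f = chi) /\
  (forall e (f : 'I_q -> {set 'I_n}), distinct_config E e f -> chi <= config_value e f).

(* A trivial two-stage algorithm: stage 1 is a fixed list of pools;
   stage 2 is a set of single elements to test individually, chosen
   (non-adaptively within the stage) as a function of the stage-1 outcomes. *)
Record two_stage_trivial (n : nat) := TwoStage {
  stage1 : seq {set 'I_n};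
  stage2 : seq bool -> {set 'I_n} }.

Definition test (n : nat) (es T : {set 'I_n}) : bool := T :&: es != set0.

Definition outcomes1 (n : nat) (A : two_stage_trivial n) (es : {set 'I_n}) : seq bool :=
  [seq test es T | T <- stage1 A].

Definition outcomes2 (n : nat) (A : two_stage_trivial n) (es : {set 'I_n}) : {set 'I_n} :=
  stage2 A (outcomes1 A es) :&: es.

Definition finds_defective (n : nat) (E : {set {set 'I_n}}) (A : two_stage_trivial n) : Prop :=
  forall e1 e2, e1 \in E -> e2 \in E ->
    outcomes1 A e1 = outcomes1 A e2 -> outcomes2 A e1 = outcomes2 A e2 -> e1 = e2.

Definition num_tests (n : nat) (E : {set {set 'I_n}}) (A : two_stage_trivial n) : nat :=
  size (stage1 A) + \max_(e in E) #|stage2 A (outcomes1 A e)|.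

(* Put every element into a random pool independently with probability p = 1/(d+chi).  Such
   a pool avoids a set A with |A| <= d and meets a disjoint set B with |B| >= chi with
   probability at least P = (1-p)^d (1 - (1-p)^chi) >= chi (2d+chi+1) / (2e (d+chi)^2), so
   by averaging, t greedily chosen pools separate all pairs of a family O of such (A, B)
   as soon as |O| (1-P)^t < 1.  If O contains, for every configuration e, e'_1, ..., e'_q
   of distinct hyperedges, a pair (e, B) with B inside the union of the e'_i minus e, then
   no q+1 hyperedges are consistent with the first-stage outcomes, and the second stage
   tests the at most dq vertices of the consistent hyperedges.  The two terms of beta come
   from two such families: all pairs (e, union of e'_i minus e), at most |E| C(|E|-1, q)
   of them, and all pairs (e, B) with |B| = chi, at most (n+d)^(d+chi) / (d! chi!). *)

From mathcomp Require Import all_boot all_order all_algebra zify ring lra.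
Import Order.TTheory GRing.Theory Num.Theory.

Set Implicit Arguments.
Unset Strict Implicit.
Unset Printing Implicit Defensive.

Lemma ffact_leq_expn n m : (n ^_ m <= n ^ m)%N.
Proof.
elim: m n => [|m IHm] n; first by rewrite ffactn0 expn0.
rewrite ffactnS expnS leq_mul2l (leq_trans (IHm _)) ?orbT //.
by case: m {IHm} => [|m]; rewrite ?expn0 // leq_exp2r // leq_pred.
Qed.

Lemma bin_fact_leq_expn n k : ('C(n, k) * k`! <= n ^ k)%N.
Proof. by rewrite bin_ffact ffact_leq_expn. Qed.

Lemma leq_card_bigcup (T I : finType) (P : {pred I}) (F : I -> {set T}) :
  (#|\bigcup_(i in P) F i| <= \sum_(i in P) #|F i|)%N.
Proof.
apply: (big_ind2 (fun (U : {set T}) s => #|U| <= s)%N) => //; first by rewrite cards0.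
by move=> U1 s1 U2 s2 le1 le2; rewrite (leq_trans (leq_card_setU _ _)) ?leq_add.
Qed.

Lemma card_small_sets (T : finType) d :
  (#|[set A : {set T} | #|A| <= d]| <= 'C(#|T| + d, d))%N.
Proof.
have -> : [set A : {set T} | #|A| <= d] =
          \bigcup_(k < d.+1) [set A : {set T} | #|A| == k].
  apply/setP => A; rewrite inE; apply/idP/bigcupP => [le_Ad | [k _]].
    by exists (Ordinal (le_Ad : #|A| < d.+1)); rewrite ?inE.
  by rewrite inE => /eqP ->; rewrite -ltnS.
rewrite (leq_trans (leq_card_bigcup _ _)) // -binomial.Vandermonde.
apply: leq_sum => k _; rewrite card_draws leq_pmulr // bin_gt0.
by rewrite leq_subr.
Qed.

Lemma exists_inj_ord (T : finType) (S : {set T}) q : (q <= #|S|)%N ->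
  exists f : 'I_q -> T, injective f /\ forall i, f i \in S.
Proof.
move=> le_qS; exists (fun i => enum_val (widen_ord le_qS i)); split.
  by move=> i j /enum_val_inj /(congr1 val) eq_ij; apply: val_inj.
by move=> i; exact: enum_valP.
Qed.

Definition separates (T : finType) (X : {set T}) (x : {set T} * {set T}) : bool :=
  (X :&: x.1 == set0) && (X :&: x.2 != set0).

Local Open Scope ring_scope.

Definition separating_pools (T : finType) (s : seq {set T}) (O : {set {set T} * {set T}}) :=
  forall x, x \in O -> has (fun X => separates X x) s.

Section RandomPool.
Variables (R : realFieldType) (T : finType) (p : R).

Definition pool_weight (X : {set T}) : R :=
  \prod_(x : T) (if x \in X then p else 1 - p).

Lemma sum_pool_weight_avoid (C : {set T}) :
  \sum_(X : {set T}) pool_weight X * (X :&: C == set0)%:R = (1 - p) ^+ #|C|.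
Proof.
(* Weight of the choice b for x, killing every pool that meets C. *)
pose g (x : T) (b : bool) : R := if b then (if x \in C then 0 else p) else 1 - p.
have prod_g (X : {set T}) : \prod_x g x (x \in X) = pool_weight X * (X :&: C == set0)%:R.
  have [XC0 | /set0Pn [x]] := eqVneq (X :&: C) set0.
    rewrite mulr1; apply: eq_bigr => x _; rewrite /g.
    case xX: (x \in X) => //.
    have : x \notin X :&: C by rewrite XC0 in_set0.
    by rewrite inE xX /= => /negbTE ->.
  by rewrite inE => /andP [xX xC]; rewrite mulr0 (bigD1 x) //= /g xX xC mul0r.
have sum_g : \prod_(x : T) \sum_(b : bool) g x b = (1 - p) ^+ #|C|.
  rewrite -prodr_const (big_mkcond (fun x => x \in C)) /=.
  apply: eq_bigr => x _; rewrite big_bool /g /=.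
  by case: (x \in C); rewrite ?add0r // addrC subrK.
rewrite -sum_g bigA_distr_bigA /=.
rewrite (reindex (fun f : {ffun T -> bool} => [set x | f x])) /=; last first.
  exists (fun X : {set T} => [ffun x => x \in X]) => [f _ | X _].
    by apply/ffunP => x; rewrite ffunE inE.
  by apply/setP => x; rewrite inE ffunE.
by apply: eq_bigr => f _; rewrite -prod_g; apply: eq_bigr => x _; rewrite inE.
Qed.

Lemma sum_pool_weight : \sum_(X : {set T}) pool_weight X = 1.
Proof.
rewrite -(expr0 (1 - p)) -(cards0 T) -sum_pool_weight_avoid.
by apply: eq_bigr => X _; rewrite setI0 eqxx mulr1.
Qed.

Lemma sum_pool_weight_separates (A B : {set T}) : [disjoint A & B] ->
  \sum_(X : {set T}) pool_weight X * (separates X (A, B))%:R =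
  (1 - p) ^+ #|A| * (1 - (1 - p) ^+ #|B|).
Proof.
move=> disAB.
have sepE X : (separates X (A, B))%:R =
    (X :&: A == set0)%:R - (X :&: (A :|: B) == set0)%:R :> R.
  rewrite /separates /= setIUr setU_eq0.
  by case: (X :&: A == set0); case: (X :&: B == set0); rewrite ?subrr ?subr0.
under eq_bigr => X _ do rewrite sepE mulrBr.
rewrite sumrB !sum_pool_weight_avoid cardsU.
move: disAB; rewrite -setI_eq0 => /eqP ->.
by rewrite cards0 subn0 exprD mulrBr mulr1.
Qed.

Hypothesis p01 : 0 <= p <= 1.

Lemma pool_weight_ge0 X : 0 <= pool_weight X.
Proof. by case/andP: p01 => p0 p1; apply: prodr_ge0 => x _; case: ifP; lra. Qed.

Lemma exists_pool_separating_many (O : {set {set T} * {set T}}) (P : R) :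
  (forall x, x \in O -> P <= \sum_(X : {set T}) pool_weight X * (separates X x)%:R) ->
  exists X, P * #|O|%:R <= #|O :&: [set x | separates X x]|%:R.
Proof.
move=> sepO; pose hits X := #|O :&: [set x | separates X x]|.
have hitsE X : (hits X)%:R = \sum_(x in O) (separates X x)%:R :> R.
  rewrite /hits -sum1_card natr_sum big_mkcond [in RHS]big_mkcond /=.
  by apply: eq_bigr => x _; rewrite !inE; case: (x \in O); case: (separates X x).
have [Xm _ Xm_max] := @arg_maxnP _ set0 xpredT hits isT.
exists Xm; rewrite mulr_natr -sumr_const.
apply: le_trans (ler_sum _ sepO) _; rewrite exchange_big /=.
apply: le_trans (_ : \sum_(X : {set T}) pool_weight X * (hits Xm)%:R <= _).
  apply: ler_sum => X _; rewrite -mulr_sumr -hitsE.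
  by rewrite ler_wpM2l ?pool_weight_ge0 // ler_nat; exact: Xm_max.
by rewrite -mulr_suml sum_pool_weight mul1r.
Qed.

Lemma exists_separating_pools (P : R) (k : nat) (O : {set {set T} * {set T}}) :
  P <= 1 ->
  (forall x, x \in O -> P <= \sum_(X : {set T}) pool_weight X * (separates X x)%:R) ->
  #|O|%:R * (1 - P) ^+ k < 1 ->
  exists2 s : seq {set T}, (size s <= k)%N & separating_pools s O.
Proof.
move=> P_le1; elim: k O => [|k IHk] O sepO Ok.
  exists [::] => // x xO; move: Ok; rewrite expr0 mulr1.
  have : (1 : R) <= #|O|%:R by rewrite ler1n; apply/card_gt0P; exists x.
  lra.
have [X hitsX] := exists_pool_separating_many sepO.
pose O' := O :\: [set x | separates X x].
have sepO' x : x \in O' -> P <= \sum_X pool_weight X * (separates X x)%:R.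
  by rewrite inE => /andP [_ /sepO].
have O'k : #|O'|%:R * (1 - P) ^+ k < 1.
  apply: le_lt_trans Ok; rewrite exprS mulrA ler_wpM2r ?exprn_ge0 ?subr_ge0 //.
  have := cardsID [set x | separates X x] O.
  rewrite /O' => /(congr1 (GRing.natmul (1 : R))); rewrite natrD; lra.
have [s size_s sepO's] := IHk O' sepO' O'k.
exists (X :: s) => // x xO /=; case: (boolP (separates X x)) => //= sepX.
by apply: sepO's; rewrite !inE sepX.
Qed.

End RandomPool.

Section CandidatesAlgorithm.
Variables (n : nat) (E : {set {set 'I_n}}) (q : nat).

Definition dominates_configs (O : {set {set 'I_n} * {set 'I_n}}) : Prop :=
  forall e (f : 'I_q -> {set 'I_n}), distinct_config E e f ->
    exists2 B, (e, B) \in O & B \subset (\bigcup_(i < q) f i) :\: e.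

Local Notation outcomes s e := [seq test e T | T <- s].

Definition candidates_algorithm (s : seq {set 'I_n}) : two_stage_trivial n :=
  TwoStage s (fun o => \bigcup_(e in E | outcomes s e == o) e).

Lemma candidates_algorithm_finds s : finds_defective E (candidates_algorithm s).
Proof.
have sub_stage2 e : e \in E -> e \subset stage2 (candidates_algorithm s) (outcomes s e).
  by move=> eE; apply: (bigcup_sup e); rewrite eE eqxx.
move=> e1 e2 e1E e2E _; rewrite /outcomes2.
by rewrite (setIidPr (sub_stage2 _ e1E)) (setIidPr (sub_stage2 _ e2E)).
Qed.

Variable O : {set {set 'I_n} * {set 'I_n}}.
Hypothesis domO : dominates_configs O.

Lemma card_consistent_leq s e : separating_pools s O -> e \in E ->
  (#|[set e' in E | outcomes s e' == outcomes s e]| <= q)%N.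
Proof.
move=> sepO eE; set cls := [set e' in E | _]; rewrite leqNgt; apply/negP => lt_q.
have e_cls : e \in cls by rewrite inE eE eqxx.
have [f [f_inj f_cls]] : exists f : 'I_q -> {set 'I_n},
    injective f /\ forall i, f i \in cls :\ e.
  by apply: exists_inj_ord; rewrite (cardsD1 e) e_cls add1n ltnS in lt_q.
have fP i : [/\ f i != e, f i \in E & outcomes s (f i) = outcomes s e].
  by have := f_cls i; rewrite !inE => /and3P [-> -> /eqP].
have cfg : distinct_config E e f by split=> // i; case: (fP i).
have [B eBO sub_B] := domO cfg.
have /hasP [T Ts /andP [/= /eqP Te /set0Pn [y]]] := sepO _ eBO.
rewrite inE => /andP [yT yB].
have /setDP [/bigcupP [i _ yf] _] := subsetP sub_B y yB.
(* The pool T misses e but meets f i at y, against equal outcomes. *)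
have [_ _ /eq_in_map /(_ T Ts)] := fP i; rewrite /test Te eqxx.
by case: eqP => // /setP /(_ y); rewrite !inE yT yf.
Qed.

Lemma num_tests_candidates_algorithm d s :
  (forall e, e \in E -> #|e| <= d)%N -> separating_pools s O ->
  (num_tests E (candidates_algorithm s) <= size s + d * q)%N.
Proof.
move=> hE sepO; rewrite /num_tests leq_add2l; apply/bigmax_leqP => e eE.
set cls := [set e' in E | outcomes s e' == outcomes s e].
have -> : stage2 (candidates_algorithm s) (outcomes1 (candidates_algorithm s) e) =
          \bigcup_(e' in cls) e'.
  by apply: eq_bigl => e'; rewrite inE.
apply: leq_trans (leq_card_bigcup _ _) _.
apply: leq_trans (_ : \sum_(e' in cls) d <= _)%N.
  by apply: leq_sum => e'; rewrite inE => /andP [/hE].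
by rewrite sum_nat_const mulnC leq_mul2l card_consistent_leq ?orbT.
Qed.

End CandidatesAlgorithm.

Definition bounded_pairs (T : finType) (d chi : nat) (O : {set {set T} * {set T}}) :=
  forall x, x \in O -> [/\ (#|x.1| <= d)%N, (chi <= #|x.2|)%N & [disjoint x.1 & x.2]].

Definition separation_prob (R : pzRingType) (p : R) (d chi : nat) : R :=
  (1 - p) ^+ d * (1 - (1 - p) ^+ chi).

Section SeparationProb.
Variables (R : realFieldType) (p : R) (d chi : nat).
Hypothesis p01 : 0 <= p <= 1.

Let exprn_1Bp_01 k : 0 <= (1 - p) ^+ k <= 1.
Proof.
by have /andP [p0 p1] := p01; rewrite exprn_ge0 ?exprn_ile1 //; lra.
Qed.

Lemma separation_prob_le1 : separation_prob p d chi <= 1.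
Proof.
have /andP [a0 a1] := exprn_1Bp_01 d; have /andP [b0 b1] := exprn_1Bp_01 chi.
rewrite /separation_prob; nra.
Qed.

Lemma separation_prob_le (T : finType) (A B : {set T}) :
  (#|A| <= d)%N -> (chi <= #|B|)%N -> [disjoint A & B] ->
  separation_prob p d chi <= \sum_(X : {set T}) pool_weight p X * (separates X (A, B))%:R.
Proof.
have /andP [p0 p1] := p01; have /andP [a0 a1] := exprn_1Bp_01 d.
have /andP [b0 b1] := exprn_1Bp_01 chi.
move=> leA leB disAB; rewrite sum_pool_weight_separates //.
apply: ler_pM; rewrite ?subr_ge0 //.
  by rewrite ler_wiXn2l //; lra.
by rewrite lerD2l lerN2 ler_wiXn2l //; lra.
Qed.

End SeparationProb.

Lemma exists_candidates_algorithm (R : realFieldType) n d q chi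
    (E : {set {set 'I_n}}) (O : {set {set 'I_n} * {set 'I_n}}) (p : R) (t : nat) :
  (forall e, e \in E -> (#|e| <= d)%N) ->
  bounded_pairs d chi O -> dominates_configs E q O -> 0 <= p <= 1 ->
  #|O|%:R * (1 - separation_prob p d chi) ^+ t < 1 ->
  exists A, finds_defective E A /\ (num_tests E A <= t + d * q)%N.
Proof.
move=> hE bndO domO p01 Ot.
have [|s size_s sepO] := exists_separating_pools p01 (separation_prob_le1 d chi p01) _ Ot.
  by move=> [A B] /bndO [] /=; exact: separation_prob_le.
exists (candidates_algorithm E s); split; first exact: candidates_algorithm_finds.
by rewrite (leq_trans (num_tests_candidates_algorithm domO hE sepO)) ?leq_add2r.
Qed.

Lemma bigcup_imset_ord (T : finType) q (f : 'I_q -> {set T}) :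
  \bigcup_(X in [set f i | i in 'I_q]) X = \bigcup_(i < q) f i.
Proof. by rewrite big_imset_idem //; exact: setUid. Qed.

Section ConstraintFamilies.
Variables (n : nat) (E : {set {set 'I_n}}) (d q chi : nat).
Hypotheses (hE : forall e, e \in E -> (#|e| <= d)%N) (hchi : is_chi E q chi).

Lemma chi_leq_config e (f : 'I_q -> {set 'I_n}) :
  distinct_config E e f -> (chi <= #|(\bigcup_(i < q) f i) :\: e|)%N.
Proof. exact: hchi.2. Qed.

Lemma dominates_configs_card_gt0 O : dominates_configs E q O -> (0 < #|O|)%N.
Proof.
move=> domO; have [[e [f [cfg _]]] _] := hchi.
by have [B eBO _] := domO e f cfg; apply/card_gt0P; exists (e, B).
Qed.

Lemma is_chi_bounds : (0 < chi)%N -> (0 < d)%N /\ (chi <= n)%N.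
Proof.
have [[e [f [[eE fE _ _] <-]]] _] := hchi; rewrite /config_value => chi_gt0.
split; last by rewrite (leq_trans (max_card _)) ?card_ord.
have /card_gt0P [y /setDP [/bigcupP [i _ yf] _]] := chi_gt0.
by apply: leq_trans (hE (fE i)); apply/card_gt0P; exists y.
Qed.

Definition config_constraints : {set {set 'I_n} * {set 'I_n}} :=
  \bigcup_(e in E) [set (e, (\bigcup_(X in (F : {set {set 'I_n}})) X) :\: e) |
                    F in [set F : {set {set 'I_n}} | F \subset E :\ e & #|F| == q]].

Definition disjoint_constraints : {set {set 'I_n} * {set 'I_n}} :=
  [set x : {set 'I_n} * {set 'I_n} | [&& x.1 \in E, #|x.2| == chi & [disjoint x.1 & x.2]]].

Lemma config_constraints_bounded : bounded_pairs d chi config_constraints.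
Proof.
move=> x /bigcupP [e eE /imsetP [F]]; rewrite inE => /andP [F_sub /eqP F_q] ->.
have [f [f_inj fF]] := exists_inj_ord (eq_leq (esym F_q)).
have imfE : [set f i | i in 'I_q] = F.
  apply/eqP; rewrite eqEcard card_imset // card_ord F_q leqnn andbT.
  by apply/subsetP => _ /imsetP [i _ ->].
split=> /=; [exact: hE | | by rewrite disjoint_sym disjoints_subset setDE subsetIr].
rewrite -imfE bigcup_imset_ord chi_leq_config //.
by split=> // i; case/setD1P: (subsetP F_sub _ (fF i)).
Qed.

Lemma config_constraints_dominate : dominates_configs E q config_constraints.
Proof.
move=> e f [eE fE f_inj f_e]; exists ((\bigcup_(i < q) f i) :\: e) => //.
apply/bigcupP; exists e => //; apply/imsetP; exists [set f i | i in 'I_q].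
  rewrite inE card_imset // card_ord eqxx andbT.
  by apply/subsetP => _ /imsetP [i _ ->]; rewrite !inE f_e fE.
by rewrite bigcup_imset_ord.
Qed.

Lemma card_config_constraints :
  (#|config_constraints| <= #|E| * 'C(#|E| - 1, q))%N.
Proof.
apply: leq_trans (leq_card_bigcup _ _) _; rewrite -sum_nat_const.
apply: leq_sum => e eE.
apply: leq_trans (leq_imset_card _ _) _.
by rewrite cards_draws (cardsD1 e E) eE add1n subn1.
Qed.

Lemma disjoint_constraints_bounded : bounded_pairs d chi disjoint_constraints.
Proof.
by move=> [A B]; rewrite inE => /and3P [/hE AE /eqP <- disAB].
Qed.

Lemma disjoint_constraints_dominate : dominates_configs E q disjoint_constraints.
Proof.
move=> e f cfg; set U := _ :\: e.
have : (0 < #|[set B : {set 'I_n} | B \subset U & #|B| == chi]|)%N.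
  by rewrite cards_draws bin_gt0 chi_leq_config.
case/card_gt0P => B; rewrite inE => /andP [BU cardB]; exists B => //.
rewrite inE cardB; case: cfg => -> _ _ _ /=.
by rewrite disjoint_sym disjoints_subset (subset_trans BU) // /U setDE subsetIr.
Qed.

Lemma card_disjoint_constraints :
  (#|disjoint_constraints| * (d`! * chi`!) <= (n + d) ^ (d + chi))%N.
Proof.
have card_dc : (#|disjoint_constraints| <= #|E| * 'C(n, chi))%N.
  rewrite -[n in 'C(n, _)]card_ord -card_draws -cardsX subset_leq_card //.
  by apply/subsetP => -[A B]; rewrite !inE /= => /and3P [-> -> _].
have card_E : (#|E| <= 'C(n + d, d))%N.
  rewrite -[n in 'C(n + _, _)]card_ord (leq_trans _ (card_small_sets _ d)) //.
  by rewrite subset_leq_card //; apply/subsetP => e eE; rewrite inE hE.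
apply: leq_trans (_ : 'C(n + d, d) * 'C(n + d, chi) * (d`! * chi`!) <= _)%N.
  by rewrite leq_mul2r (leq_trans card_dc) ?orbT // leq_mul // leq_bin2l ?leq_addr.
by rewrite mulnACA expnD leq_mul ?bin_fact_leq_expn.
Qed.

End ConstraintFamilies.

(* Imported only now: classical_sets shadows finset names such as set0 and subsetP. *)
From mathcomp Require Import all_classical all_reals all_analysis.

Section ExpBounds.
Variable R : realType.

Lemma exprD1_le_expR (x : R) k : 0 <= 1 + x -> (1 + x) ^+ k <= expR (x * k%:R).
Proof.
move=> x_ge; rewrite expRM_natr lerXn2r ?nnegrE ?expR_ge0 //.
exact: expR_ge1Dx.
Qed.

Lemma exprDV_le_expR1 k : (0 < k)%N -> (1 + k%:R^-1) ^+ k <= expR 1 :> R.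
Proof.
move=> k_gt0; rewrite -[X in expR X](@mulVf _ k%:R) ?pnatr_eq0 -?lt0n //.
by rewrite exprD1_le_expR // addr_ge0 ?invr_ge0.
Qed.

Lemma natr_expr_le_expR_fact k : (k%:R : R) ^+ k <= expR 1 ^+ k * k`!%:R.
Proof.
elim: k => [|k IHk]; first by rewrite !expr0 mul1r.
have le_k1 : (k.+1%:R : R) ^+ k <= expR 1 * k%:R ^+ k.
  case: k {IHk} => [|k]; first by rewrite !expr0 mulr1 -expR0 ler_expR.
  have -> : (k.+2%:R : R) = k.+1%:R * (1 + k.+1%:R^-1).
    by rewrite mulrDr mulr1 mulfV // -natr1 addrC.
  by rewrite exprMn mulrC ler_wpM2r ?exprn_ge0 ?exprDV_le_expR1.
have e_ge0 : (0 : R) <= expR 1 by exact: expR_ge0.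
have := ler_wpM2l (ler0n _ k.+1) le_k1.
have := ler_wpM2l (mulr_ge0 (ler0n _ k.+1) e_ge0) IHk.
rewrite exprS factS natrM exprS; nra.
Qed.

Lemma bin_le_expR (M q : nat) : (0 < q)%N ->
  ('C(M, q)%:R : R) <= expR 1 ^+ q * (M%:R / q%:R) ^+ q.
Proof.
move=> q_gt0; have qq_gt0 : (0 : R) < q%:R ^+ q by rewrite exprn_gt0 ?ltr0n.
rewrite expr_div_n mulrA ler_pdivlMr //.
apply: le_trans (_ : 'C(M, q)%:R * (expR 1 ^+ q * q`!%:R) <= _).
  by rewrite ler_wpM2l // natr_expr_le_expR_fact.
rewrite mulrCA ler_wpM2l ?exprn_ge0 ?expR_ge0 // -natrM -natrX ler_nat.
exact: bin_fact_leq_expn.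
Qed.

Lemma expR1_mul_expr_ge1 j : (0 < j)%N -> 1 <= expR 1 * (1 - j.+1%:R^-1) ^+ j :> R.
Proof.
move=> j_gt0; have j_pos : (0 : R) < j%:R by rewrite ltr0n.
have inv_1Bj : (1 - j.+1%:R^-1) * (1 + j%:R^-1) = 1 :> R.
  by rewrite -natr1; field; rewrite !gt_eqF //; lra.
apply: le_trans (_ : ((1 - j.+1%:R^-1) * (1 + j%:R^-1)) ^+ j <= _).
  by rewrite inv_1Bj expr1n.
rewrite exprMn mulrC ler_wpM2r ?exprDV_le_expR1 //.
by rewrite exprn_ge0 // subr_ge0 invf_le1 ?ler1n.
Qed.

Lemma bonferroni_expr (a : R) k : 0 <= a <= 1 ->
  k%:R * a - (k%:R * (k%:R - 1) / 2) * a ^+ 2 <= 1 - (1 - a) ^+ k.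
Proof.
case/andP=> a_ge0 a_le1; elim: k => [|k IHk]; first by rewrite !mul0r subr0 expr0 subrr.
have kk_ge0 : (0 : R) <= k%:R * (k%:R - 1).
  by case: k {IHk} => [|k]; rewrite ?mul0r // mulr_ge0 // -natr1 addrK.
have a3_ge0 : 0 <= k%:R * (k%:R - 1) * a ^+ 3 by rewrite mulr_ge0 ?exprn_ge0.
have a1_ge0 : 0 <= 1 - a by lra.
have := ler_wpM2l a1_ge0 IHk.
rewrite [(1 - a) ^+ k.+1]exprS -[k.+1%:R]natr1.
set Y := (1 - a) ^+ k; nra.
Qed.

Lemma separation_prob_lower_bound d chi : (0 < d)%N -> (0 < chi)%N ->
  ((d + chi + d + 1) * chi)%:R <=
  2 * expR 1 * (d + chi)%:R ^+ 2 * separation_prob (d + chi)%:R^-1 d chi :> R.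
Proof.
move=> d_gt0 chi_gt0; have [j m_eq] : exists j, (d + chi)%N = j.+1.
  by exists (d + chi).-1; lia.
have j_gt0 : (0 < j)%N by lia.
have chiE : chi%:R = j.+1%:R - d%:R :> R by rewrite -m_eq natrD addrAC subrr add0r.
rewrite m_eq /separation_prob; set p : R := j.+1%:R^-1.
have m_pos : (0 : R) < j.+1%:R by rewrite ltr0n.
have p01 : 0 <= p <= 1 by rewrite invr_ge0 ltW //= invf_le1 // ler1n.
have /andP [p_ge0 p_le1] := p01.
(* (1 - p)^d >= 1/e and Bonferroni's inequality for 1 - (1 - p)^chi. *)
have eX_ge1 : 1 <= expR 1 * (1 - p) ^+ d.
  apply: le_trans (expR1_mul_expr_ge1 j_gt0) _.
  rewrite -/p ler_wpM2l ?expR_ge0 //; apply: ler_wiXn2l; [lra | lra | lia].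
have Z_le := bonferroni_expr chi p01.
have ZE : (chi%:R * p - chi%:R * (chi%:R - 1) / 2 * p ^+ 2) * (2 * j.+1%:R ^+ 2) =
          ((j.+1 + d + 1) * chi)%:R :> R.
  by rewrite natrM !natrD chiE /p; field; rewrite gt_eqF.
rewrite -ZE; set Z := (X in X * _); set S := 1 - (1 - p) ^+ chi.
have S_ge0 : 0 <= S * (2 * j.+1%:R ^+ 2).
  by rewrite mulr_ge0 ?mulr_ge0 ?exprn_ge0 // subr_ge0 exprn_ile1 //; lra.
apply: le_trans (ler_wpM2r _ Z_le) _; first by rewrite mulr_ge0 ?exprn_ge0.
rewrite -[X in X <= _]mul1r.
have -> : 2 * expR 1 * j.+1%:R ^+ 2 * ((1 - p) ^+ d * S) =
          (expR 1 * (1 - p) ^+ d) * (S * (2 * j.+1%:R ^+ 2)) by ring.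
exact: ler_wpM2r.
Qed.

Lemma exprD1_le_expR2 (b : R) m : 0 < b -> m%:R <= 2 * b ->
  (b + 1) ^+ m <= expR 1 ^+ 2 * b ^+ m.
Proof.
move=> b_gt0 le_m; have -> : b + 1 = b * (1 + b^-1) by rewrite mulrDr mulr1 mulfV ?gt_eqF.
have bV_ge0 : 0 <= 1 + b^-1 by rewrite addr_ge0 // invr_ge0 ltW.
rewrite exprMn mulrC ler_pM2r ?exprn_gt0 //.
apply: le_trans (exprD1_le_expR m bV_ge0) _.
by rewrite -expRM_natl mulr1 ler_expR mulrC ler_pdivrMr // mulrC.
Qed.

Lemma natr_mul_expr_lt1 N (P : R) t : 0 < P <= 1 -> ln N%:R < P * t%:R ->
  N%:R * (1 - P) ^+ t < 1.
Proof.
case/andP=> P_gt0 P_le1 lt_lnN; have [->|N_gt0] := posnP N; first by rewrite mul0r.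
have N_pos : (0 : R) < N%:R by rewrite ltr0n.
apply: le_lt_trans (_ : N%:R * expR (- P * t%:R) < 1).
  have P1_ge0 : 0 <= 1 - P by lra.
  by rewrite ler_pM2l // exprD1_le_expR.
rewrite mulNr expRN ltr_pdivrMr ?expR_gt0 // mul1r.
by rewrite -[N%:R]lnK ?posrE // ltr_expR.
Qed.

End ExpBounds.

Lemma exists_rounds (R : realType) N (P K L : R) : (0 < N)%N -> 0 < P < 1 ->
  ln N%:R <= P * K * (L + 1) - 1 ->
  exists t : nat, N%:R * (1 - P) ^+ t < 1 /\ t%:R < K * (1 + L).
Proof.
move=> N_gt0 /andP [P_gt0 P_lt1] le_lnN.
have x_ge0 : 0 <= ln N%:R / P by rewrite divr_ge0 ?ln_ge0 ?ler1n ?ltW.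
exists (Num.truncn (ln N%:R / P)).+1; split.
  apply: natr_mul_expr_lt1; first by rewrite P_gt0 ltW.
  by rewrite mulrC -ltr_pdivrMr // truncnS_gt.
have le_t : (Num.truncn (ln N%:R / P)).+1%:R <= ln N%:R / P + 1.
  by rewrite -natr1 lerD2r truncn_le.
have le_x : ln N%:R / P <= K * (L + 1) - P^-1.
  rewrite ler_pdivrMr //.
  by have -> : (K * (L + 1) - P^-1) * P = P * K * (L + 1) - 1 by field; rewrite gt_eqF.
have : 1 < P^-1 by rewrite invf_gt1.
lra.
Qed.

Section MainBound.
Variables (R : realType) (n d q chi : nat) (E : {set {set 'I_n}}).
Hypotheses (hE : forall e, e \in E -> (#|e| <= d)%N) (hchi : is_chi E q chi).
Hypothesis chi_gt0 : (0 < chi)%N.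

Local Notation m := (d + chi)%N.
Local Notation P := (separation_prob (m%:R^-1 : R) d chi).
Local Notation K := (2 * expR 1 * m%:R / chi%:R : R).
Local Notation Cb := 'C(m - 1, chi - 1).

Let d_gt0 : (0 < d)%N := (is_chi_bounds hE hchi chi_gt0).1.
Let chi_leq_n : (chi <= n)%N := (is_chi_bounds hE hchi chi_gt0).2.

Lemma separation_prob_mulK_ge : (m + d + 1)%:R <= P * K * m%:R.
Proof.
have chi_pos : (0 : R) < chi%:R by rewrite ltr0n.
rewrite -(ler_pM2r chi_pos) -natrM.
have -> : P * K * m%:R * chi%:R = 2 * expR 1 * m%:R ^+ 2 * P by field; rewrite gt_eqF.
exact: separation_prob_lower_bound.
Qed.

Lemma separation_prob_mulK_ge1 : 1 <= P * K.
Proof.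
have m_pos : (0 : R) < m%:R by rewrite ltr0n addn_gt0 d_gt0.
rewrite -(ler_pM2r m_pos) mul1r (le_trans _ separation_prob_mulK_ge) //.
by rewrite ler_nat -addnA leq_addr.
Qed.

Lemma separation_prob_gt0 : 0 < P.
Proof.
have KM_gt0 : 0 < K * m%:R by rewrite !mulr_gt0 ?invr_gt0 ?ltr0n ?expR_gt0 ?addn_gt0 ?chi_gt0 ?orbT.
have : 0 < P * (K * m%:R).
  by rewrite mulrA (lt_le_trans _ separation_prob_mulK_ge) // ltr0n addn_gt0 orbT.
by rewrite pmulr_lgt0.
Qed.

Lemma separation_prob_lt1 : P < 1.
Proof.
have p_gt0 : (0 : R) < m%:R^-1 by rewrite invr_gt0 ltr0n addn_gt0 d_gt0.
have p_le1 : m%:R^-1 <= 1 :> R by rewrite invf_le1 ?ler1n ?ltr0n ?addn_gt0 d_gt0.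
have pow_lt1 : (1 - m%:R^-1) ^+ d < 1 :> R.
  by rewrite exprn_ilt1 ?subr_ge0 // -?lt0n ?gtrBl.
rewrite /separation_prob (le_lt_trans _ pow_lt1) // -[X in _ <= X]mulr1.
by rewrite ler_wpM2l ?exprn_ge0 ?subr_ge0 // lerBlDr lerDl exprn_ge0 ?subr_ge0.
Qed.

Lemma card_disjoint_constraints_le :
  #|disjoint_constraints E chi|%:R <=
  Cb%:R * (expR 1 ^+ (m - 1) * ((n + d - 1)%:R / (m - 1)%:R) ^+ m) * (d%:R * expR 1 ^+ 2) :> R.
Proof.
set j := (m - 1)%N; set N := (n + d - 1)%N; set F := (d`! * chi`!)%N.
have m_eq : m = j.+1 by rewrite /j; lia.
have F_pos : (0 : R) < F%:R by rewrite ltr0n muln_gt0 !fact_gt0.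
have jm_pos : (0 : R) < j%:R ^+ m by rewrite exprn_gt0 // ltr0n /j; lia.
have card_le : #|disjoint_constraints E chi|%:R * F%:R <= expR 1 ^+ 2 * N%:R ^+ m :> R.
  apply: le_trans (_ : (N%:R + 1 : R) ^+ m <= _).
    rewrite -natrM natr1 -natrX ler_nat (_ : N.+1 = n + d)%N; last by rewrite /N; lia.
    exact: card_disjoint_constraints.
  by apply: exprD1_le_expR2; rewrite ?ltr0n -?natrM ?ler_nat /N; lia.
have jm_le : j%:R ^+ m <= (d * chi)%:R * (expR 1 ^+ j * j`!%:R) :> R.
  by rewrite m_eq exprS ler_pM ?natr_expr_le_expR_fact // ler_nat /j; nia.
have CbF : (Cb * F = j`! * chi)%N.
  have fact_chi : chi`! = (chi * (chi - 1)`!)%N.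
    by rewrite -[in LHS](prednK chi_gt0) factS prednK // subn1.
  have le_chi_j : (chi - 1 <= j)%N by rewrite /j; lia.
  have := bin_fact le_chi_j; rewrite (_ : j - (chi - 1) = d)%N; last by rewrite /j; lia.
  by rewrite /F fact_chi => <-; ring.
(* Multiply by d! chi! j^m and use j^m <= d chi e^j j! and C(j, chi-1) d! chi! = j! chi. *)
rewrite -(ler_pM2r F_pos) -(ler_pM2r jm_pos); apply: le_trans (ler_wpM2r (ltW jm_pos) card_le) _.
have CbE : 'C(j, chi - 1)%:R = j`!%:R * chi%:R / F%:R :> R.
  by rewrite -natrM -CbF natrM mulfK ?gt_eqF.
have -> : 'C(j, chi - 1)%:R * (expR 1 ^+ j * (N%:R / j%:R) ^+ m) * (d%:R * expR 1 ^+ 2) *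
          F%:R * j%:R ^+ m =
          expR 1 ^+ 2 * N%:R ^+ m * ((d * chi)%:R * (expR 1 ^+ j * j`!%:R)) :> R.
  by rewrite CbE natrM expr_div_n; field; rewrite !gt_eqF.
by rewrite ler_wpM2l ?mulr_ge0 ?exprn_ge0 ?expR_ge0.
Qed.

Lemma ln_card_disjoint_constraints_le :
  ln #|disjoint_constraints E chi|%:R <= P * K *
    (ln (Cb%:R * (expR 1 ^+ (m - 1) * ((n + d - 1)%:R / (m - 1)%:R) ^+ m)) + 1) - 1.
Proof.
set b2 := expR 1 ^+ (m - 1) * _; set N := #|_|.
have N_gt0 : (0 < N)%N :=
  dominates_configs_card_gt0 hchi (@disjoint_constraints_dominate _ E q chi hchi).
have e_pos : (0 : R) < expR 1 by exact: expR_gt0.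
have d_pos : (0 : R) < d%:R by rewrite ltr0n.
have b2_ge : expR 1 ^+ (m - 1) <= b2.
  rewrite -[X in X <= _]mulr1 ler_wpM2l ?exprn_ge0 ?expR_ge0 // exprn_ege1 //.
  by rewrite ler_pdivlMr ?mul1r ?ler_nat ?ltr0n; lia.
have Cb_ge1 : (1 : R) <= Cb%:R by rewrite ler1n bin_gt0; lia.
have Cbb2_pos : 0 < Cb%:R * b2.
  by rewrite mulr_gt0 ?(lt_le_trans _ Cb_ge1) ?(lt_le_trans _ b2_ge) ?exprn_gt0.
set L := ln (Cb%:R * b2).
have L_ge : (m - 1)%:R <= L.
  have -> : (m - 1)%:R = ln (expR 1 ^+ (m - 1)) :> R by rewrite lnXn // expRK.
  rewrite ler_ln ?posrE ?exprn_gt0 // (le_trans b2_ge) // ler_peMl // ltW //.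
  by rewrite (lt_le_trans _ b2_ge) ?exprn_gt0.
have lnN_le : ln N%:R <= L + ln d%:R + 2.
  have -> : L + ln d%:R + 2 = ln (Cb%:R * b2 * (d%:R * expR 1 ^+ 2)).
    have de2_pos : 0 < d%:R * expR 1 ^+ 2 :> R by rewrite mulr_gt0 ?exprn_gt0.
    rewrite (@lnM _ (Cb%:R * b2)) ?posrE // -/L (@lnM _ d%:R) ?posrE ?exprn_gt0 //.
    by rewrite lnXn // expRK; ring.
  rewrite ler_ln ?posrE ?ltr0n // ?card_disjoint_constraints_le //.
  by rewrite mulr_gt0 // mulr_gt0 ?exprn_gt0.
have ln_d : ln d%:R <= d%:R - 1 :> R.
  by have := @le_ln1Dx R (d%:R - 1); rewrite [1 + _]addrC subrK; apply; lra.
(* (P K - 1) (L + 1 - m) >= 0 and P K m >= m + d + 1 give P K (L + 1) - 1 >= L + d + 1. *)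
have := separation_prob_mulK_ge; have := separation_prob_mulK_ge1.
rewrite natrB ?addn_gt0 ?d_gt0 // in L_ge; rewrite !natrD in L_ge *.
nra.
Qed.

Lemma exists_two_stage_of_constraints O (L : R) :
  bounded_pairs d chi O -> dominates_configs E q O -> ln #|O|%:R <= P * K * (L + 1) - 1 ->
  exists A, finds_defective E A /\ (num_tests E A)%:R < K * (1 + L) + (d * q)%:R.
Proof.
move=> bndO domO lnO.
have P01 : 0 < P < 1 by rewrite separation_prob_gt0 separation_prob_lt1.
have [t [Ot lt_t]] := exists_rounds (dominates_configs_card_gt0 hchi domO) P01 lnO.
have p01 : 0 <= (m%:R^-1 : R) <= 1 by rewrite invr_ge0 ler0n invf_le1 ?ler1n ?ltr0n ?addn_gt0 d_gt0.
have [A [findA num_testsA]] := exists_candidates_algorithm hE bndO domO p01 Ot.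
exists A; split=> //; apply: le_lt_trans (_ : (t + d * q)%:R < _); first by rewrite ler_nat.
by rewrite natrD ltrD2r.
Qed.

Hypothesis q_gt0 : (0 < q)%N.

Lemma ln_card_config_constraints_le :
  ln #|config_constraints E q|%:R <=
  P * K * (ln (Cb%:R * (expR 1 ^+ q * #|E|%:R * ((#|E| - 1)%:R / q%:R) ^+ q)) + 1) - 1.
Proof.
set b1 := expR 1 ^+ q * _ * _; set N := #|_|.
have N_gt0 : (0 < N)%N := dominates_configs_card_gt0 hchi (@config_constraints_dominate _ E q).
have N_le : N%:R <= Cb%:R * b1.
  apply: le_trans (_ : (#|E| * 'C(#|E| - 1, q))%:R <= _).
    by rewrite ler_nat card_config_constraints.
  have b1E : b1 = #|E|%:R * (expR 1 ^+ q * ((#|E| - 1)%:R / q%:R) ^+ q) by rewrite /b1; ring.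
  rewrite natrM b1E mulrA ler_pM ?bin_le_expR // ?ler_peMl ?ler1n ?bin_gt0 //; lia.
have N_pos : (0 : R) < N%:R by rewrite ltr0n.
set L := ln (Cb%:R * b1).
have lnN_le : ln N%:R <= L by rewrite ler_ln ?posrE // (lt_le_trans N_pos N_le).
have L_ge0 : 0 <= L by rewrite ln_ge0 // (le_trans _ N_le) // ler1n.
have := separation_prob_mulK_ge1; nra.
Qed.

End MainBound.

Theorem theorem3 (R : realType) (n d q chi : nat) (E : {set {set 'I_n}}) :
  (forall e, e \in E -> (#|e| <= d)%N) ->
  (1 <= q)%N -> (q <= #|E| - 1)%N ->
  (0 < chi)%N -> is_chi E q chi ->
  let eu : R := expR 1 in
  let beta : R :=
    Num.min (eu ^+ q * (#|E|)%:R * ((#|E| - 1)%N%:R / q%:R) ^+ q)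
            (eu ^+ (d + chi - 1)%N *
               ((n + d - 1)%N%:R / (d + chi - 1)%N%:R) ^+ (d + chi)%N) in
  exists A : two_stage_trivial n,
    finds_defective E A /\
    (num_tests E A)%:R <
       (2 * eu * (d + chi)%N%:R) / chi%:R *
         (1 + ln ('C(d + chi - 1, d + chi - d - 1)%N%:R * beta)) + (d * q)%N%:R.
Proof.
move=> hE q_gt0 _ chi_gt0 hchi eu beta.
rewrite (_ : d + chi - d - 1 = chi - 1)%N; last by lia.
have [->|->] : beta = eu ^+ q * #|E|%:R * ((#|E| - 1)%:R / q%:R) ^+ q \/
               beta = eu ^+ (d + chi - 1) * ((n + d - 1)%:R / (d + chi - 1)%:R) ^+ (d + chi).
  by rewrite /beta minEle; case: ifP; [left | right].
all: rewrite /eu.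
- exact (exists_two_stage_of_constraints hE hchi chi_gt0 (config_constraints_bounded hE hchi)
    (@config_constraints_dominate _ E q) (ln_card_config_constraints_le R hE hchi chi_gt0 q_gt0)).
- exact (exists_two_stage_of_constraints hE hchi chi_gt0 (disjoint_constraints_bounded hE)
    (disjoint_constraints_dominate hchi) (ln_card_disjoint_constraints_le R hE hchi chi_gt0)).
Qed.
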